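(* Let $t\ge 3$, let $\Gamma$ be a maximal triangle-free graph on vertex set $\{z_1,\dots,z_t\}$, and let $a,b$ be positive integers. Then the graph $\Gamma[a,b]$ has no triangle-free homomorphic image with fewer than $t$ vertices.
   Context: $M_{t,t}$ is the bipartite graph on $\{x_i,y_i\}_{i\in[t]}$ with $x_iy_j\in E$ iff $i\ne j$ (complete bipartite $K_{t,t}$ minus a perfect matching). $M_{t,t}\vee\Gamma$ is the disjoint union of $M_{t,t}$ and $\Gamma$ together with the edges $x_iz_i$ and $y_iz_i$ for all $i\in[t]$. $\Gamma[a,b]$ is obtained from $M_{t,t}\vee\Gamma$ by replacing each vertex of $M_{t,t}$ by an independent set of $a$ copies and each vertex of $\Gamma$ by an independent set of $b$ copies, each edge becoming a complete bipartite graph between the corresponding sets. A triangle-free homomorphic image of $G$ is a triangle-free graph $F$ with a map $V(G)\to V(F)$ sending edges to edges. *)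

From mathcomp Require Import all_boot.
Set Implicit Arguments. Unset Strict Implicit. Unset Printing Implicit Defensive.

Definition simple_graph (T : finType) (e : rel T) : Prop :=
  symmetric e /\ irreflexive e.

Definition triangle_free (T : finType) (e : rel T) : Prop :=
  forall u v w : T, ~~ [&& e u v, e v w & e u w].

(* Maximal triangle-free: triangle-free, and adding any non-edge uv
   (u <> v) creates a triangle, i.e. u and v have a common neighbour. *)
Definition maximal_triangle_free (T : finType) (e : rel T) : Prop :=
  simple_graph e /\ triangle_free e /\
  forall u v : T, u != v -> ~~ e u v -> exists w, e u w && e w v.

(* Vertices of Gamma[a,b]:
   inl (i, false, k) = k-th copy of x_i,  inl (i, true, k) = k-th copy of y_i
   (k < a);  inr (i, k) = k-th copy of z_i (k < b). *)
Definition blowup_vertex (t a b : nat) : finType :=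
  (('I_t * bool * 'I_a) + ('I_t * 'I_b))%type.

(* Adjacency in the base graph M_{t,t} \vee Gamma on the labels. *)
Definition base_adj (t : nat) (G : rel 'I_t)
  (p q : ('I_t * bool) + 'I_t) : bool :=
  match p, q with
  | inl (i, s), inl (j, s') => (s != s') && (i != j)
  | inl (i, _), inr j => i == j
  | inr i, inl (j, _) => i == j
  | inr i, inr j => G i j
  end.

Definition blowup_label (t a b : nat) (v : blowup_vertex t a b)
  : ('I_t * bool) + 'I_t :=
  match v with
  | inl (i, s, _) => inl (i, s)
  | inr (i, _) => inr i
  end.

Arguments base_adj : clear implicits.
Definition blowup_adj (t : nat) (G : rel 'I_t) (a b : nat)
  : rel (blowup_vertex t a b) :=
  fun u v => base_adj t G (blowup_label u) (blowup_label v).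
Arguments blowup_adj : clear implicits.

Definition graph_hom (T U : finType) (e : rel T) (e' : rel U) (f : T -> U)
  : Prop := forall u v, e u v -> e' (f u) (f v).

From mathcomp Require Import all_boot.

Set Implicit Arguments.
Unset Strict Implicit.
Unset Printing Implicit Defensive.

(* In a triangle-free image, z_i and z_j (i <> j) cannot be identified: they
   are the ends of the path z_i - x_i - y_j - z_j, so identifying them closes
   a triangle.  Hence the t copies of Gamma's vertices have distinct images. *)

Lemma hom_triangle_free_neq (T U : finType) (e : rel T) (e' : rel U)
    (f : T -> U) (u v w x : T) :
  graph_hom e e' f -> triangle_free e' ->
  e u v -> e v w -> e x w -> f u != f x.
Proof.
move=> hom tf_e' euv evw exw; apply/eqP => fux.
have := tf_e' (f u) (f v) (f w).
by rewrite hom // hom // fux hom.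
Qed.

Section Blowup.

Variables (t : nat) (G : rel 'I_t) (a b : nat).

Lemma blowup_adj_zx (i : 'I_t) (s : bool) (k : 'I_b) (k' : 'I_a) :
  blowup_adj t G a b (inr (i, k)) (inl (i, s, k')).
Proof. by rewrite /blowup_adj /= eqxx. Qed.

Lemma blowup_adj_xy (i j : 'I_t) (k k' : 'I_a) :
  i != j -> blowup_adj t G a b (inl (i, false, k)) (inl (j, true, k')).
Proof. by rewrite /blowup_adj /=. Qed.

Lemma blowup_hom_triangle_free_inj (n : nat) (F : rel 'I_n)
    (f : blowup_vertex t a b -> 'I_n) (kb : 'I_b) :
  0 < a -> graph_hom (blowup_adj t G a b) F f -> triangle_free F ->
  injective (fun i => f (inr (i, kb))).
Proof.
move=> a_gt0 hom tfF i j fij; pose ka : 'I_a := Ordinal a_gt0.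
apply/eqP; apply: contraT => neq_ij.
have := hom_triangle_free_neq hom tfF
  (blowup_adj_zx i false kb ka) (blowup_adj_xy ka ka neq_ij)
  (blowup_adj_zx j true kb ka).
by rewrite fij eqxx.
Qed.

End Blowup.

Theorem proposition3p3 (t : nat) (G : rel 'I_t) (a b : nat) :
  3 <= t -> maximal_triangle_free G -> 0 < a -> 0 < b ->
  forall (n : nat) (F : rel 'I_n) (f : blowup_vertex t a b -> 'I_n),
    n < t -> simple_graph F -> triangle_free F ->
    ~ graph_hom (blowup_adj t G a b) F f.
Proof.
move=> _ _ a_gt0 b_gt0 n F f n_lt_t _ tfF hom.
have inj_z := blowup_hom_triangle_free_inj (kb := Ordinal b_gt0) a_gt0 hom tfF.
by have := leq_card _ inj_z; rewrite !card_ord leqNgt n_lt_t.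
Qed.
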